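(* Let $\sigma,\eta>0$ and $\mathscr{C}$ be a family of balls as in the context. Let $B_0\in\mathscr{C}$ with $0\in B_0$, let $R>0$ be such that $B_0^{(7)}\subset B(0,R)$, and let $\mathscr{C}_R:=\{B\in\mathscr{C}: B\cap B(0,R)\neq\emptyset\}$. Then there is a constant $C$ depending only on $\eta$ such that for every $B\in\mathscr{C}_R$, \[ |x_B|\le CR\quad\text{and}\quad r_B\le CR. \]
   Context: Cover: for constants $\sigma,\eta>0$, $\mathscr{C}$ is a family of closed balls in $\mathbb{R}^3$ with $\bigcup_{B\in\mathscr{C}}B=\mathbb{R}^3$ and $|B|\geq 4\pi/3$ for all $B\in\mathscr{C}$, such that (i) each ball in $\mathscr{C}$ intersects at most $\sigma$ balls in $\mathscr{C}$, and (ii) if $B,B'\in\mathscr{C}$ intersect then $\eta^{-1}\le |B|^{1/3}/|B'|^{1/3}\le\eta$. $x_B$ and $r_B$ denote the center and radius of $B$. Layers: for $B\in\mathscr{C}$ set $B^{(0)}:=B$, $P^{(0)}:=\{B\}$, and for $n\ge1$, $P^{(n)}:=\{B'\in\mathscr{C}: B'\cap B^{(n-1)}\neq\emptyset\}$, $B^{(n)}:=\bigcup_{B'\in P^{(n)}}B'$. *)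

From Stdlib Require Import Reals Lra List.
Open Scope R_scope.

Definition point := (R * R * R)%type.

Definition norm3 (p : point) : R :=
  let '(a, b, c) := p in sqrt (a * a + b * b + c * c).

Definition dist3 (p q : point) : R :=
  let '(a1, b1, c1) := p in
  let '(a2, b2, c2) := q in
  sqrt ((a1 - a2) * (a1 - a2) + (b1 - b2) * (b1 - b2) + (c1 - c2) * (c1 - c2)).

Record ball := mkBall { center : point ; radius : R }.

Definition in_ball (B : ball) (x : point) : Prop := dist3 x (center B) <= radius B.

Definition vol (B : ball) : R := 4 / 3 * PI * radius B ^ 3.

Definition intersects (B B' : ball) : Prop := exists x, in_ball B x /\ in_ball B' x.

Definition is_cover (sigma eta : R) (C : ball -> Prop) : Prop :=
  (forall x : point, exists B, C B /\ in_ball B x) /\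
  (forall B, C B -> vol B >= 4 * PI / 3) /\
  (forall B, C B -> forall L : list ball, NoDup L ->
     (forall B', In B' L -> C B' /\ intersects B B') -> INR (length L) <= sigma) /\
  (forall B B', C B -> C B' -> intersects B B' ->
     / eta <= Rpower (vol B) (1/3) / Rpower (vol B') (1/3) <= eta).

(* Layers: layer C n B is the set B^(n) *)
Fixpoint layer (C : ball -> Prop) (n : nat) (B : ball) : point -> Prop :=
  match n with
  | O => in_ball B
  | S m => fun x => exists B', C B' /\ (exists y, layer C m B y /\ in_ball B' y) /\ in_ball B' x
  end.

Definition in_ball0 (R0 : R) (x : point) : Prop := norm3 x <= R0.

From Stdlib Require Import Reals Lra List Classical ClassicalEpsilon.
Open Scope R_scope.

(** Balls of the cover have radius at least 1 and intersecting balls have radii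
    within a factor eta. Elementary geometry shows that three pairwise disjoint
    balls of radius at least 8 rho cannot all meet a ball of radius rho; with the
    bounded overlap this makes the cover locally finite. A connectedness argument
    along the segment from a point of B inside B(0,R) to the origin (a point of B_0,
    whose radius is at most R) then gives, for every t >= R below r_B, a ball
    meeting B(0,R) with radius in (t, eta t]. Taking t = 8R, 8 eta^2 R, 8 eta^4 R
    produces three pairwise disjoint balls of radius at least 8R meeting B(0,R),
    which is impossible; hence r_B <= 8 eta^4 R and |x_B| <= r_B + R. *)

Definition vadd (u v : point) : point :=
  let '(u1, u2, u3) := u in let '(v1, v2, v3) := v in (u1 + v1, u2 + v2, u3 + v3).

Definition vsub (u v : point) : point :=
  let '(u1, u2, u3) := u in let '(v1, v2, v3) := v in (u1 - v1, u2 - v2, u3 - v3).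

Definition vscale (k : R) (u : point) : point :=
  let '(u1, u2, u3) := u in (k * u1, k * u2, k * u3).

Definition dot (u v : point) : R :=
  let '(u1, u2, u3) := u in let '(v1, v2, v3) := v in u1 * v1 + u2 * v2 + u3 * v3.

Definition seg (p q : point) (s : R) : point := vadd p (vscale s (vsub q p)).

Lemma dot_self_ge0 (u : point) : 0 <= dot u u.
Proof. destruct u as [[u1 u2] u3]; cbn; nra. Qed.

Lemma norm3_ge0 (u : point) : 0 <= norm3 u.
Proof. destruct u as [[u1 u2] u3]; apply sqrt_pos. Qed.

Lemma norm3_sqr (u : point) : norm3 u * norm3 u = dot u u.
Proof.
  destruct u as [[u1 u2] u3]; apply sqrt_sqrt.
  exact (dot_self_ge0 (u1, u2, u3)).
Qed.

Lemma norm3_scale (k : R) (u : point) : norm3 (vscale k u) = Rabs k * norm3 u.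
Proof.
  destruct u as [[u1 u2] u3]; cbn.
  replace (k * u1 * (k * u1) + k * u2 * (k * u2) + k * u3 * (k * u3))
    with (Rsqr k * (u1 * u1 + u2 * u2 + u3 * u3)) by (unfold Rsqr; ring).
  rewrite sqrt_mult_alt by apply Rle_0_sqr.
  now rewrite sqrt_Rsqr_abs.
Qed.

Lemma dot_le_norm3 (u v : point) : dot u v <= norm3 u * norm3 v.
Proof.
  pose proof (norm3_ge0 u) as Hu; pose proof (norm3_ge0 v) as Hv.
  assert (Hsq : dot u v * dot u v <= (norm3 u * norm3 v) * (norm3 u * norm3 v)).
  { replace ((norm3 u * norm3 v) * (norm3 u * norm3 v))
      with ((norm3 u * norm3 u) * (norm3 v * norm3 v)) by ring.
    rewrite !norm3_sqr.
    destruct u as [[u1 u2] u3]; destruct v as [[v1 v2] v3]; cbn.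
    pose proof (Rle_0_sqr (u1 * v2 - u2 * v1)); pose proof (Rle_0_sqr (u1 * v3 - u3 * v1));
    pose proof (Rle_0_sqr (u2 * v3 - u3 * v2)); unfold Rsqr in *; nra. }
  pose proof (Rmult_le_pos _ _ Hu Hv); nra.
Qed.

Lemma norm3_triangle (u v : point) : norm3 (vadd u v) <= norm3 u + norm3 v.
Proof.
  pose proof (norm3_ge0 u); pose proof (norm3_ge0 v); pose proof (norm3_ge0 (vadd u v)).
  assert (Hsq : norm3 (vadd u v) * norm3 (vadd u v) <= (norm3 u + norm3 v) * (norm3 u + norm3 v)).
  { replace ((norm3 u + norm3 v) * (norm3 u + norm3 v))
      with (norm3 u * norm3 u + 2 * (norm3 u * norm3 v) + norm3 v * norm3 v) by ring.
    rewrite !norm3_sqr.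
    replace (dot (vadd u v) (vadd u v)) with (dot u u + 2 * dot u v + dot v v)
      by (destruct u as [[u1 u2] u3]; destruct v as [[v1 v2] v3]; cbn; ring).
    pose proof (dot_le_norm3 u v); lra. }
  nra.
Qed.

Lemma dist3_norm3 (p q : point) : dist3 p q = norm3 (vsub p q).
Proof. now destruct p as [[p1 p2] p3]; destruct q as [[q1 q2] q3]. Qed.

Lemma norm3_dist0 (p : point) : norm3 p = dist3 p (0, 0, 0).
Proof. destruct p as [[p1 p2] p3]; unfold norm3, dist3; f_equal; ring. Qed.

Lemma dist3_ge0 (p q : point) : 0 <= dist3 p q.
Proof. rewrite dist3_norm3; apply norm3_ge0. Qed.

Lemma dist3_sym (p q : point) : dist3 p q = dist3 q p.
Proof. destruct p as [[p1 p2] p3]; destruct q as [[q1 q2] q3]; unfold dist3; f_equal; ring. Qed.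

Lemma dist3_triangle (p q r : point) : dist3 p r <= dist3 p q + dist3 q r.
Proof.
  rewrite !dist3_norm3.
  replace (vsub p r) with (vadd (vsub p q) (vsub q r)); [apply norm3_triangle|].
  destruct p as [[p1 p2] p3]; destruct q as [[q1 q2] q3]; destruct r as [[r1 r2] r3].
  cbn; f_equal; [f_equal|]; ring.
Qed.

Lemma dist3_sqr (p q : point) : dist3 p q * dist3 p q = dot (vsub p q) (vsub p q).
Proof. rewrite dist3_norm3; apply norm3_sqr. Qed.

Lemma seg0 (p q : point) : seg p q 0 = p.
Proof.
  destruct p as [[p1 p2] p3]; destruct q as [[q1 q2] q3]; cbn; f_equal; [f_equal|]; ring.
Qed.

Lemma seg1 (p q : point) : seg p q 1 = q.
Proof.
  destruct p as [[p1 p2] p3]; destruct q as [[q1 q2] q3]; cbn; f_equal; [f_equal|]; ring.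
Qed.

Lemma dist3_seg (p q : point) (s s' : R) :
  dist3 (seg p q s) (seg p q s') = Rabs (s - s') * dist3 p q.
Proof.
  rewrite (dist3_sym p q), !dist3_norm3, <- norm3_scale; f_equal.
  destruct p as [[p1 p2] p3]; destruct q as [[q1 q2] q3]; cbn; f_equal; [f_equal|]; ring.
Qed.

Lemma in_ball_seg_center (E : ball) (y : point) (s : R) :
  0 <= s <= 1 -> in_ball E y -> in_ball E (seg y (center E) s).
Proof.
  intros Hs Hy; unfold in_ball in *.
  pose proof (dist3_seg y (center E) s 1) as Hd; rewrite seg1 in Hd; rewrite Hd.
  rewrite Rabs_left1 by lra.
  pose proof (dist3_ge0 y (center E)); nra.
Qed.

Lemma intersects_sym (D E : ball) : intersects D E -> intersects E D.
Proof. intros [x [HD HE]]; now exists x. Qed.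

Lemma dist_center_le_of_intersects (D E : ball) :
  intersects D E -> dist3 (center D) (center E) <= radius D + radius E.
Proof.
  intros [x [HxD HxE]]; unfold in_ball in *.
  pose proof (dist3_triangle (center D) x (center E)) as H.
  rewrite (dist3_sym (center D) x) in H; lra.
Qed.

Lemma intersects_of_dist_center_le (D E : ball) : 0 <= radius D -> 0 <= radius E ->
  dist3 (center D) (center E) <= radius D + radius E -> intersects D E.
Proof.
  intros HD HE Hd.
  assert (Hk : exists k, 0 <= k <= 1 /\ k * (radius D + radius E) = radius D).
  { destruct (Req_dec (radius D + radius E) 0).
    - exists 0; lra.
    - exists (radius D / (radius D + radius E)).
      assert (Hk : radius D / (radius D + radius E) * (radius D + radius E) = radius D)
        by (field; lra).
      split; [split|exact Hk]; nra. }
  destruct Hk as [k [Hk Hkr]].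
  pose proof (dist3_ge0 (center D) (center E)).
  exists (seg (center D) (center E) k); unfold in_ball; split.
  - pose proof (dist3_seg (center D) (center E) k 0) as Hs; rewrite seg0 in Hs.
    rewrite Hs, Rabs_pos_eq by lra; nra.
  - pose proof (dist3_seg (center D) (center E) k 1) as Hs; rewrite seg1 in Hs.
    rewrite Hs, Rabs_left1 by lra; nra.
Qed.

Lemma radius_le_of_subset (D E : ball) : 0 <= radius D ->
  (forall x, in_ball D x -> in_ball E x) -> radius D <= radius E.
Proof.
  intros Hr Hsub.
  destruct D as [[[c1 c2] c3] r]; cbn [radius] in *.
  assert (Hsqrt : forall a, a * a = r * r -> sqrt (a * a + (c2 - c2) * (c2 - c2) + (c3 - c3) * (c3 - c3)) = r).
  { intros a Ha; rewrite <- (sqrt_square r Hr); f_equal; lra. }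
  assert (Hplus : in_ball E (c1 + r, c2, c3))
    by (apply Hsub; unfold in_ball, dist3; cbn; rewrite Hsqrt; [lra|ring]).
  assert (Hminus : in_ball E (c1 - r, c2, c3))
    by (apply Hsub; unfold in_ball, dist3; cbn; rewrite Hsqrt; [lra|ring]).
  assert (Hdiam : dist3 (c1 + r, c2, c3) (c1 - r, c2, c3) = 2 * r).
  { unfold dist3; rewrite <- (sqrt_square (2 * r)) by lra; f_equal; ring. }
  unfold in_ball in *.
  pose proof (dist3_triangle (c1 + r, c2, c3) (center E) (c1 - r, c2, c3)).
  rewrite (dist3_sym (center E)) in H; lra.
Qed.

Lemma three_vectors_pairwise_obtuse (u v w : point) (a b c : R) :
  0 < a -> 0 < b -> 0 < c ->
  dot u u <= a * a -> dot v v <= b * b -> dot w w <= c * c ->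
  2 * dot u v < - (a * b) -> 2 * dot u w < - (a * c) -> 2 * dot v w < - (b * c) -> False.
Proof.
  intros Ha Hb Hc Hu Hv Hw Huv Huw Hvw.
  pose proof (dot_self_ge0 (vadd (vadd (vscale (b * c) u) (vscale (a * c) v)) (vscale (a * b) w)))
    as Hz.
  replace (dot _ _) with ((b * c) * (b * c) * dot u u + (a * c) * (a * c) * dot v v
      + (a * b) * (a * b) * dot w w
      + (a * b * c) * (c * (2 * dot u v) + b * (2 * dot u w) + a * (2 * dot v w))) in Hz
    by (destruct u as [[u1 u2] u3]; destruct v as [[v1 v2] v3]; destruct w as [[w1 w2] w3];
        cbn; ring).
  assert (Habc : 0 < a * b * c) by (repeat apply Rmult_lt_0_compat; lra).
  assert (c * (2 * dot u v) + b * (2 * dot u w) + a * (2 * dot v w) < - 3 * (a * b * c)) by nra.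
  assert (Hbound : forall k x r, 0 <= k -> x <= r * r -> k * k * x <= (k * r) * (k * r)).
  { intros k x r Hk Hx; replace ((k * r) * (k * r)) with (k * k * (r * r)) by ring.
    apply Rmult_le_compat_l; nra. }
  pose proof (Hbound (b * c) _ a ltac:(nra) Hu).
  pose proof (Hbound (a * c) _ b ltac:(nra) Hv).
  pose proof (Hbound (a * b) _ c ltac:(nra) Hw).
  replace (b * c * a) with (a * b * c) in * by ring.
  replace (a * c * b) with (a * b * c) in * by ring.
  nra.
Qed.

Lemma far_centers_obtuse (c c' p : point) (r r' rho : R) :
  0 < rho -> 8 * rho <= r -> 8 * rho <= r' ->
  dist3 c p <= r + rho -> dist3 c' p <= r' + rho -> r + r' < dist3 c c' ->
  2 * dot (vsub c p) (vsub c' p) < - ((r + rho) * (r' + rho)).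
Proof.
  intros Hrho Hr Hr' Hc Hc' Hcc'.
  assert (Hsq : forall x y, 0 <= x <= y -> x * x <= y * y) by (intros; nra).
  pose proof (Hsq _ _ (conj (dist3_ge0 c p) Hc)) as Hu.
  pose proof (Hsq _ _ (conj (dist3_ge0 c' p) Hc')) as Hv.
  assert (Huv : (r + r') * (r + r') < dist3 c c' * dist3 c c') by nra.
  rewrite !dist3_sqr in *.
  replace (dot (vsub c c') (vsub c c'))
    with (dot (vsub c p) (vsub c p) - 2 * dot (vsub c p) (vsub c' p) + dot (vsub c' p) (vsub c' p))
    in Huv
    by (destruct c as [[c1 c2] c3]; destruct c' as [[d1 d2] d3]; destruct p as [[p1 p2] p3];
        cbn; ring).
  nra.
Qed.

Lemma no_three_disjoint_big_balls_near (D1 D2 D3 : ball) (p : point) (rho : R) :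
  0 < rho -> 8 * rho <= radius D1 -> 8 * rho <= radius D2 -> 8 * rho <= radius D3 ->
  intersects D1 (mkBall p rho) -> intersects D2 (mkBall p rho) -> intersects D3 (mkBall p rho) ->
  ~ intersects D1 D2 -> ~ intersects D1 D3 -> ~ intersects D2 D3 -> False.
Proof.
  intros Hrho H1 H2 H3 Hp1 Hp2 Hp3 H12 H13 H23.
  apply dist_center_le_of_intersects in Hp1, Hp2, Hp3; cbn in Hp1, Hp2, Hp3.
  assert (Hfar : forall D E, 8 * rho <= radius D -> 8 * rho <= radius E -> ~ intersects D E ->
    radius D + radius E < dist3 (center D) (center E)).
  { intros D E HD HE HDE; apply Rnot_le_lt; intros Hd.
    apply HDE, intersects_of_dist_center_le; auto; lra. }
  apply Hfar in H12, H13, H23; auto.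
  assert (Hnorm : forall D, dist3 (center D) p <= radius D + rho ->
    dot (vsub (center D) p) (vsub (center D) p) <= (radius D + rho) * (radius D + rho)).
  { intros D HD; rewrite <- dist3_sqr; pose proof (dist3_ge0 (center D) p); nra. }
  apply (three_vectors_pairwise_obtuse (vsub (center D1) p) (vsub (center D2) p)
           (vsub (center D3) p) (radius D1 + rho) (radius D2 + rho) (radius D3 + rho));
    auto; try lra; apply far_centers_obtuse; auto.
Qed.

Lemma three_pairwise_unrelated {A : Type} (rel : A -> A -> Prop) (sigma : R) (L : list A) :
  0 <= sigma -> NoDup L -> 2 * sigma < INR (length L) ->
  (forall x, In x L -> forall L', NoDup L' -> (forall y, In y L' -> In y L /\ rel x y) ->
     INR (length L') <= sigma) ->
  exists x y z, In x L /\ In y L /\ In z L /\ ~ rel x y /\ ~ rel x z /\ ~ rel y z.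
Proof.
  intros Hsigma HL Hlen Hdeg.
  set (relb x y := if excluded_middle_informative (rel x y) then true else false).
  assert (Hrelb : forall x y, relb x y = true <-> rel x y).
  { intros x y; unfold relb; destruct excluded_middle_informative; split; easy. }
  destruct L as [|x L'] eqn:EL; [cbn in Hlen; lra|]; rewrite <- EL in *.
  assert (Hx : In x L) by (rewrite EL; now left).
  assert (Hy : exists y, In y L /\ ~ rel x y).
  { apply NNPP; intros Hn.
    assert (INR (length L) <= sigma); [|lra].
    apply (Hdeg x Hx L HL); intros y Hy; split; [easy|].
    apply NNPP; intros Hxy; apply Hn; now exists y. }
  destruct Hy as [y [Hy Hxy]].
  exists x, y.
  apply NNPP; intros Hn.
  assert (Hrel : INR (length (filter (relb x) L)) <= sigma).
  { apply (Hdeg x Hx); [now apply NoDup_filter|].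
    intros z Hz; apply filter_In in Hz; split; [easy|now apply Hrelb]. }
  assert (Hunrel : INR (length (filter (fun z => negb (relb x z)) L)) <= sigma).
  { apply (Hdeg y Hy); [now apply NoDup_filter|].
    intros z Hz; apply filter_In in Hz; destruct Hz as [Hz Hxz]; split; [easy|].
    apply NNPP; intros Hyz; apply Hn; exists z; repeat split; auto.
    intros Hxz'; apply Hrelb in Hxz'; rewrite Hxz' in Hxz; discriminate. }
  rewrite <- (filter_length (relb x) L), plus_INR in Hlen; lra.
Qed.

Lemma list_pos_lower_bound {A : Type} (f : A -> R) (L : list A) :
  (forall x, In x L -> 0 < f x) -> exists m, 0 < m /\ forall x, In x L -> m <= f x.
Proof.
  induction L as [|a L IH]; intros Hpos.
  - exists 1; split; [lra|easy].
  - destruct IH as [m [Hm Hmin]]; [intros x Hx; apply Hpos; now right|].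
    exists (Rmin (f a) m); split.
    + apply Rmin_glb_lt; auto; apply Hpos; now left.
    + intros x [<-|Hx]; [apply Rmin_l|].
      eapply Rle_trans; [apply Rmin_r|auto].
Qed.

Lemma unit_interval_locally_constant (P : R -> Prop) :
  (forall s, 0 <= s <= 1 -> exists h, 0 < h /\
     forall s', 0 <= s' <= 1 -> Rabs (s' - s) <= h -> (P s' <-> P s)) ->
  P 0 -> P 1.
Proof.
  intros Hloc H0; apply NNPP; intros H1.
  set (S s := 0 <= s <= 1 /\ P s).
  destruct (completeness S) as [ss [Hub Hlub]].
  { exists 1; now intros s [Hs _]. }
  { exists 0; split; [lra|easy]. }
  assert (Hss : 0 <= ss <= 1).
  { split; [apply Hub; split; [lra|easy]|apply Hlub; now intros s [Hs _]]. }
  destruct (Hloc ss Hss) as [h [Hh Hconst]].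
  assert (Hs : exists s, S s /\ ss - h < s).
  { apply NNPP; intros Hn.
    assert (ss <= ss - h); [|lra].
    apply Hlub; intros s Hs; apply Rnot_lt_le; intros Hlt; apply Hn; now exists s. }
  destruct Hs as [s [[Hs HPs] Hsh]].
  assert (Hsle : s <= ss) by (apply Hub; now split).
  assert (HPss : P ss) by (apply (Hconst s Hs); [rewrite Rabs_left1; lra|easy]).
  destruct (Req_dec ss 1) as [E|Hlt]; [subst; easy|].
  set (s' := Rmin 1 (ss + h)).
  assert (Hs' : ss < s' <= 1) by (split; [apply Rmin_glb_lt|apply Rmin_l]; lra).
  assert (Hs'h : s' <= ss + h) by apply Rmin_r.
  assert (ss >= s'); [|lra].
  apply Rle_ge, Hub; split; [lra|].
  apply (Hconst s'); [lra|rewrite Rabs_pos_eq; lra|easy].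
Qed.

Lemma long_lists_of_balls_near (F : ball -> Prop) (p : point) (r : R) : 0 < r ->
  (forall d, 0 < d -> exists D, F D /\ intersects D (mkBall p d) /\ ~ in_ball D p) ->
  forall n, exists L, NoDup L /\ length L = n /\
    forall D, In D L -> F D /\ intersects D (mkBall p r) /\ ~ in_ball D p.
Proof.
  intros Hr Hacc n; induction n as [|n [L [HL [Hlen HLF]]]].
  - exists nil; split; [constructor|easy].
  - (* the new ball comes closer to p than every ball already chosen *)
    destruct (list_pos_lower_bound (fun D => dist3 p (center D) - radius D) L) as [m [Hm Hmin]].
    { intros D HD; destruct (HLF D HD) as [_ [_ Hout]]; unfold in_ball in Hout; lra. }
    destruct (Hacc (Rmin r (m / 2))) as [D [HFD [Hnear Hout]]]; [apply Rmin_glb_lt; lra|].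
    pose proof (Rmin_l r (m / 2)); pose proof (Rmin_r r (m / 2)).
    exists (D :: L); split; [|split; [cbn; congruence|]].
    + constructor; [|easy]; intros HD; specialize (Hmin D HD); cbn in Hmin.
      apply dist_center_le_of_intersects in Hnear; cbn in Hnear.
      rewrite dist3_sym in Hnear; lra.
    + intros D' [<-|HD']; [|now apply HLF].
      repeat split; auto.
      destruct Hnear as [z [Hz Hzp]]; exists z; split; auto.
      unfold in_ball in *; cbn in *; lra.
Qed.

Section Cover.

Variables (sigma eta : R) (C : ball -> Prop).
Hypothesis cover : is_cover sigma eta C.

Lemma cover_radius_ge1 (D : ball) : C D -> 1 <= radius D.
Proof.
  destruct cover as [_ [Hvol _]]; intros HD; specialize (Hvol D HD); unfold vol in Hvol.
  pose proof PI_RGT_0.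
  assert (H3 : 1 <= radius D ^ 3) by (apply Rmult_le_reg_l with (4 / 3 * PI); lra).
  destruct (Rle_or_lt 1 (radius D)) as [|Hlt]; [easy|].
  destruct (Rle_or_lt (radius D) 0); cbn in H3; nra.
Qed.

Lemma vol_cbrt (D : ball) : 0 < radius D ->
  Rpower (vol D) (1 / 3) = Rpower (4 / 3 * PI) (1 / 3) * radius D.
Proof.
  intros Hr; pose proof PI_RGT_0; unfold vol.
  rewrite <- Rpower_mult_distr; [|lra|apply pow_lt; lra].
  f_equal; rewrite <- (Rpower_pow 3 (radius D) Hr), Rpower_mult.
  replace (INR 3 * (1 / 3)) with 1 by (cbn; field).
  now apply Rpower_1.
Qed.

Lemma cover_radius_le (D E : ball) : C D -> C E -> intersects D E ->
  radius D <= eta * radius E.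
Proof.
  intros HD HE HDE.
  pose proof (cover_radius_ge1 D HD); pose proof (cover_radius_ge1 E HE).
  destruct cover as [_ [_ [_ Hratio]]]; destruct (Hratio D E HD HE HDE) as [_ Hle].
  rewrite !vol_cbrt in Hle by lra.
  assert (Hk : 0 < Rpower (4 / 3 * PI) (1 / 3)) by apply exp_pos.
  replace (Rpower (4 / 3 * PI) (1 / 3) * radius D / (Rpower (4 / 3 * PI) (1 / 3) * radius E))
    with (radius D / radius E) in Hle by (field; lra).
  apply Rmult_le_compat_r with (r := radius E) in Hle; [|lra].
  unfold Rdiv in Hle; rewrite Rmult_assoc, Rinv_l, Rmult_1_r in Hle by lra; exact Hle.
Qed.

Lemma cover_eta_ge1 : 1 <= eta.
Proof.
  destruct cover as [Hcov _]; destruct (Hcov (0, 0, 0)) as [D [HD H0]].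
  pose proof (cover_radius_ge1 D HD).
  pose proof (cover_radius_le D D HD HD (ex_intro _ _ (conj H0 H0))); nra.
Qed.

Lemma cover_sigma_ge1 : 1 <= sigma.
Proof.
  destruct cover as [Hcov [_ [Hdeg _]]]; destruct (Hcov (0, 0, 0)) as [D [HD H0]].
  change 1 with (INR (length (D :: nil))).
  apply (Hdeg D HD); [repeat constructor; easy|].
  intros D' [<-|[]]; split; [easy|now exists (0, 0, 0)].
Qed.

Lemma cover_locally_finite (p : point) :
  exists d, 0 < d /\ forall D, C D -> intersects D (mkBall p d) -> in_ball D p.
Proof.
  apply NNPP; intros Hn.
  assert (Hacc : forall d, 0 < d -> exists D, C D /\ intersects D (mkBall p d) /\ ~ in_ball D p).
  { intros d Hd; apply NNPP; intros Hd'; apply Hn; exists d; split; [easy|].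
    intros D HD Hnear; apply NNPP; intros Hout; apply Hd'; now exists D. }
  destruct (INR_archimed 1 (2 * sigma)) as [n Hn']; [lra|].
  destruct (long_lists_of_balls_near C p (1 / 8) ltac:(lra) Hacc n) as [L [HL [Hlen HLC]]].
  destruct (three_pairwise_unrelated intersects sigma L) as
    (D1 & D2 & D3 & H1 & H2 & H3 & H12 & H13 & H23); auto.
  - pose proof cover_sigma_ge1; lra.
  - rewrite Hlen; lra.
  - destruct cover as [_ [_ [Hdeg _]]].
    intros D HD L' HL' HL'L; apply (Hdeg D); [now apply HLC|easy|].
    intros D' HD'; destruct (HL'L D' HD') as [HD'L Hint]; split; [now apply HLC|easy].
  - destruct (HLC D1 H1) as [C1 [N1 _]], (HLC D2 H2) as [C2 [N2 _]], (HLC D3 H3) as [C3 [N3 _]].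
    pose proof (cover_radius_ge1 D1 C1); pose proof (cover_radius_ge1 D2 C2);
      pose proof (cover_radius_ge1 D3 C3).
    apply (no_three_disjoint_big_balls_near D1 D2 D3 p (1 / 8)); auto; lra.
Qed.

Lemma exists_radius_between (y q : point) (t : R) :
  (exists B, C B /\ in_ball B y /\ t < radius B) ->
  (exists B, C B /\ in_ball B q /\ radius B <= t) ->
  exists D, C D /\ (exists s, 0 <= s <= 1 /\ in_ball D (seg y q s)) /\ t < radius D <= eta * t.
Proof.
  intros [B [HB [HyB HtB]]] [Bq [HBq [HqBq Hqt]]].
  pose proof cover_eta_ge1 as Heta.
  apply NNPP; intros Hno.
  assert (Hbig : forall E s, C E -> 0 <= s <= 1 -> in_ball E (seg y q s) -> t < radius E ->
    eta * t < radius E).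
  { intros E s HE Hs HEs HtE; apply Rnot_le_lt; intros HEt; apply Hno.
    exists E; split; [easy|split; [now exists s|lra]]. }
  set (P s := exists D, C D /\ eta * t < radius D /\ in_ball D (seg y q s)).
  assert (HP0 : P 0).
  { exists B; rewrite seg0; split; [easy|split; [|easy]].
    apply (Hbig B 0); [easy|lra|now rewrite seg0|easy]. }
  assert (HP1 : ~ P 1).
  { intros [D [HD [HDt HDq]]]; rewrite seg1 in HDq.
    pose proof (cover_radius_le D Bq HD HBq (ex_intro _ q (conj HDq HqBq))); nra. }
  apply HP1, unit_interval_locally_constant; [|easy].
  intros s Hs.
  destruct (cover_locally_finite (seg y q s)) as [d [Hd Hlf]].
  pose proof (dist3_ge0 y q).
  exists (d / (dist3 y q + 1)); split; [apply Rdiv_lt_0_compat; lra|].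
  intros s' Hs' Hss'.
  assert (Hnear : forall E, in_ball E (seg y q s') -> intersects E (mkBall (seg y q s) d)).
  { intros E HE; exists (seg y q s'); split; [easy|]; unfold in_ball; cbn.
    rewrite dist3_seg.
    apply Rle_trans with (d / (dist3 y q + 1) * dist3 y q); [apply Rmult_le_compat_r; lra|].
    apply Rle_trans with (d / (dist3 y q + 1) * (dist3 y q + 1));
      [apply Rmult_le_compat_l; [apply Rlt_le, Rdiv_lt_0_compat|]; lra|].
    right; field; lra. }
  split.
  - intros [D [HD [HDt HDs']]]; exists D; split; [easy|split; [easy|]].
    now apply Hlf, Hnear.
  - intros [D [HD [HDt HDs]]].
    destruct cover as [Hcov _]; destruct (Hcov (seg y q s')) as [E [HE HEs']].
    pose proof (Hlf E HE (Hnear E HEs')) as HEs.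
    pose proof (cover_radius_le D E HD HE (ex_intro _ _ (conj HDs HEs))).
    exists E; split; [easy|split; [|easy]].
    apply (Hbig E s'); auto; nra.
Qed.

Lemma cover_radius_le_of_meets (B0 : ball) (q : point) (R0 : R) :
  C B0 -> in_ball B0 q -> radius B0 <= R0 ->
  forall B, C B -> intersects B (mkBall q R0) -> radius B <= 8 * eta ^ 4 * R0.
Proof.
  intros HB0 HqB0 HB0R B HB [y [HyB Hyq]].
  pose proof cover_eta_ge1 as Heta; pose proof (cover_radius_ge1 B0 HB0).
  assert (Heta2 : 1 <= eta ^ 2) by nra.
  assert (Heta4 : eta ^ 2 <= eta ^ 4) by nra.
  apply Rnot_lt_le; intros Hlarge.
  assert (Hstep : forall t, R0 <= t -> t < radius B ->
    exists D, C D /\ intersects D (mkBall q R0) /\ t < radius D <= eta * t).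
  { intros t Ht HtB.
    destruct (exists_radius_between y q t) as [D [HD [[s [Hs HDs]] HDt]]].
    - now exists B.
    - exists B0; split; [easy|split; [easy|lra]].
    - exists D; split; [easy|split; [|easy]].
      exists (seg y q s); split; [easy|exact (in_ball_seg_center (mkBall q R0) y s Hs Hyq)]. }
  set (T := 8 * R0).
  destruct (Hstep T) as [D1 [C1 [N1 [L1 U1]]]]; [unfold T; lra|unfold T; nra|].
  destruct (Hstep (eta ^ 2 * T)) as [D2 [C2 [N2 [L2 U2]]]]; [unfold T; nra|unfold T; nra|].
  destruct (Hstep (eta ^ 4 * T)) as [D3 [C3 [N3 [L3 U3]]]]; [unfold T; nra|unfold T; lra|].
  assert (Hdisj : forall D E, C D -> C E -> eta * radius D < radius E -> ~ intersects D E).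
  { intros D E HD HE Hlt HDE.
    pose proof (cover_radius_le E D HE HD (intersects_sym D E HDE)); lra. }
  assert (HT : 0 < T) by (unfold T; lra).
  assert (eta * radius D1 <= eta ^ 2 * T)
    by (replace (eta ^ 2 * T) with (eta * (eta * T)) by ring; apply Rmult_le_compat_l; lra).
  assert (eta * radius D2 <= eta ^ 4 * T)
    by (replace (eta ^ 4 * T) with (eta * (eta * (eta ^ 2 * T))) by ring;
        apply Rmult_le_compat_l; lra).
  apply (no_three_disjoint_big_balls_near D1 D2 D3 q R0); auto; try (unfold T in *; nra).
  - apply Hdisj; auto; lra.
  - apply Hdisj; auto; nra.
  - apply Hdisj; auto; lra.
Qed.

End Cover.

Lemma layer_of_in_ball (sigma eta : R) (C : ball -> Prop) (B0 : ball) (x : point) (n : nat) :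
  is_cover sigma eta C -> in_ball B0 x -> layer C n B0 x.
Proof.
  intros [Hcov _] Hx; induction n as [|n IH]; [easy|].
  destruct (Hcov x) as [B [HB HBx]].
  exists B; split; [easy|split; [now exists x|easy]].
Qed.

Theorem proposition3p5 :
  forall eta : R, 0 < eta ->
  exists Cst : R,
  forall (sigma : R) (C : ball -> Prop),
    0 < sigma -> is_cover sigma eta C ->
    forall (B0 : ball) (R0 : R),
      C B0 -> in_ball B0 (0, 0, 0) -> 0 < R0 ->
      (forall x, layer C 7 B0 x -> in_ball0 R0 x) ->
      forall B : ball, C B -> (exists y, in_ball B y /\ in_ball0 R0 y) ->
        norm3 (center B) <= Cst * R0 /\ radius B <= Cst * R0.
Proof.
  (* positivity of eta and sigma follows from the cover axioms *)
  intros eta _; exists (1 + 8 * eta ^ 4).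
  intros sigma C _ Hcover B0 R0 HB0 H0 HR0 Hlayer B HB [y [HyB HyR]].
  assert (Hin0 : forall x, in_ball0 R0 x <-> in_ball (mkBall (0, 0, 0) R0) x)
    by (intros x; unfold in_ball0, in_ball; cbn; now rewrite norm3_dist0).
  assert (HB0R : radius B0 <= R0).
  { apply (radius_le_of_subset B0 (mkBall (0, 0, 0) R0)).
    - pose proof (cover_radius_ge1 sigma eta C Hcover B0 HB0); lra.
    - intros x Hx; apply Hin0, Hlayer, (layer_of_in_ball sigma eta C); auto. }
  assert (HBR : radius B <= 8 * eta ^ 4 * R0).
  { apply (cover_radius_le_of_meets sigma eta C Hcover B0 (0, 0, 0) R0); auto.
    exists y; split; [easy|now apply Hin0]. }
  split; [|lra].
  rewrite norm3_dist0; unfold in_ball, in_ball0 in *; rewrite norm3_dist0 in HyR.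
  pose proof (dist3_triangle (center B) y (0, 0, 0)).
  rewrite (dist3_sym (center B) y) in H; lra.
Qed.
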